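(* Let $(S,d)$ be a metric space, let $\mu$ be a finite signed Borel measure on $S$ that is separable (i.e. there is a separable $S_0\subset S$ with $|\mu|(S_0)=|\mu|(S)$), and let $\bullet\in\{\mathrm{FM},\mathrm{BL}\}$. Then there exists $f^\bullet_\mu\in\operatorname{ext}(B^S_\bullet)$ such that $\|\mu\|^*_\bullet=\int_S f^\bullet_\mu\,d\mu$.
   Context: $\mathrm{BL}(S)$ is the space of bounded real-valued Lipschitz functions on $S$, $|f|_L=\sup_{x\neq y}|f(x)-f(y)|/d(x,y)$, $\|f\|_{\mathrm{BL}}=\|f\|_\infty+|f|_L$, $\|f\|_{\mathrm{FM}}=\max(\|f\|_\infty,|f|_L)$, $B^S_\bullet=\{f\in\mathrm{BL}(S):\|f\|_\bullet\le1\}$, $\operatorname{ext}$ denotes the set of extreme points, $|\mu|$ is the total variation of $\mu$, and $\|\mu\|^*_\bullet=\sup_{f\in B^S_\bullet}\int_S f\,d\mu$. *)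

From HB Require Import structures.
From mathcomp Require Import all_boot all_order all_algebra.
From mathcomp Require Import all_classical all_reals all_analysis.
Set Implicit Arguments. Unset Strict Implicit. Unset Printing Implicit Defensive.
Import Order.TTheory GRing.Theory Num.Theory.
Import numFieldNormedType.Exports.
Local Open Scope classical_set_scope.
Local Open Scope ring_scope.

(* nonempty metric spaces: measurable-space structures in MathComp-Analysis
   require a pointed carrier *)
#[short(type="pmetricType")]
HB.structure Definition PointedMetric (K : numDomainType) :=
  { M of Metric K M & isPointed M }.

Section defs.
Context {R : realType} {S : pmetricType R}.

Local Notation borel_of := (g_sigma_algebraType (@open S)).

Inductive norm_kind := FM | BL.

Local Open Scope ereal_scope.

(* ||f||_oo (with the convention sup of an empty set of nonnegatives = 0) *)
Definition sup_norm (f : S -> R) : \bar R :=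
  ereal_sup ([set 0] `|` [set (`|f x|)%:E | x in [set: S]]).

Definition lip_seminorm (f : S -> R) : \bar R :=
  ereal_sup ([set 0] `|`
    [set z | exists x y : S, x != y /\ z = (`|f x - f y| / mdist x y)%:E]).

Definition bnorm (k : norm_kind) (f : S -> R) : \bar R :=
  match k with
  | FM => maxe (sup_norm f) (lip_seminorm f)
  | BL => sup_norm f + lip_seminorm f
  end.

(* B^S_k : closed unit ball of BL(S) for the norm k (finite norm forces
   f to be bounded and Lipschitz) *)
Definition unit_ball (k : norm_kind) : set (S -> R) :=
  [set f | bnorm k f <= 1].

Local Close Scope ereal_scope.

Definition extreme_point (B : set (S -> R)) (f : S -> R) : Prop :=
  B f /\ forall (g h : S -> R) (t : R), B g -> B h -> 0 < t < 1 ->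
    f = (fun x => t * g x + (1 - t) * h x) -> g = f /\ h = f.

Local Open Scope ereal_scope.

Context {nu : {charge set borel_of -> \bar R}} {P N : set borel_of}.
Variable (nuPN : hahn_decomposition nu P N).

Definition signed_integral (f : S -> R) : \bar R :=
  \int[jordan_pos nuPN]_x (f x)%:E - \int[jordan_neg nuPN]_x (f x)%:E.

Definition total_variation : set borel_of -> \bar R := charge_variation nuPN.

Definition dual_norm (k : norm_kind) : \bar R :=
  ereal_sup [set signed_integral f | f in unit_ball k].

Definition separable_subset (S0 : set S) : Prop :=
  exists D : set S, countable D /\ D `<=` S0 /\ S0 `<=` closure D.

Definition separable_charge : Prop :=
  exists S0 : set borel_of, measurable S0 /\ separable_subset S0 /\
    total_variation S0 = total_variation [set: borel_of].

End defs.

Notation borel_of S := (g_sigma_algebraType (@open S)).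

From HB Require Import structures.
From mathcomp Require Import all_boot all_order all_algebra.
From mathcomp Require Import all_classical all_reals all_analysis.
From mathcomp Require Import ring lra measurable_realfun.
Import Order.TTheory GRing.Theory Num.Theory.
Import numFieldNormedType.Exports.
Set Implicit Arguments. Unset Strict Implicit. Unset Printing Implicit Defensive.
Local Open Scope classical_set_scope.
Local Open Scope ring_scope.

(** For the topology of pointwise convergence the unit ball [B]
    of [BL(S)] is compact (Tychonoff), and on [B] the functional
    [phi f = int f dnu] is affine and upper semicontinuous.  The latter uses
    separability: members of [B] are 1-Lipschitz, so closeness at the first
    [n] points of a countable dense sequence forces uniform closeness on a
    union of small balls which, for [n] large, carries almost all of [|nu|].
    Bauer's maximum principle then yields an extreme point of [B] where [phi]
    attains its supremum: by Zorn's lemma some closed face of [B] inside the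
    set of maximisers is minimal, and a minimal closed face [G] is a point,
    because the maximisers over [G] of each evaluation [f |-> f x] form a
    closed face contained in [G]. *)

Lemma ereal_supD_le (R : realType) (A B : set \bar R) (c : R) :
  A !=set0 -> B !=set0 ->
  (forall u, A u -> u \is a fin_num) -> (forall v, B v -> v \is a fin_num) ->
  (ereal_sup A + ereal_sup B <= c%:E <-> forall u v, A u -> B v -> u + v <= c%:E)%E.
Proof.
move=> [u0 Au0] [v0 Bv0] Afin Bfin; split.
  by move=> h u v Au Bv; apply: le_trans h; apply: leeD; exact: ereal_sup_ubound.
move=> h; have supA v : B v -> (ereal_sup A <= c%:E - v)%E.
  by move=> Bv; apply: ge_ereal_sup => u Au; rewrite leeBrDr ?Bfin //; exact: h.
have supA_fin : ereal_sup A \is a fin_num.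
  have := ereal_sup_ubound Au0; have := supA _ Bv0.
  move: (Afin _ Au0) (Bfin _ Bv0) (ereal_sup A) => /fineK <- /fineK <- [r| |] //.
suff : (ereal_sup B <= c%:E - ereal_sup A)%E by rewrite leeBrDl.
apply: ge_ereal_sup => v Bv; rewrite leeBrDl // -leeBrDr ?Bfin //; exact: supA.
Qed.

Lemma Zorn_bigcap (T : Type) (P : set (set T)) : P !=set0 ->
  (forall F : set (set T), F `<=` P -> F !=set0 -> total_on F subset ->
    P (\bigcap_(X in F) X)) ->
  exists2 G, P G & forall H, P H -> H `<=` G -> H = G.
Proof.
move=> -[G0 PG0] capP.
pose R (sA sB : {A | A \in P}) := `[< sval sB `<=` sval sA >].
have [[G PG] Gmin] : exists sG, forall sH, R sG sH -> sH = sG.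
  apply: Zorn.
  - by move=> ?; apply/asboolP.
  - by move=> ? ? ? /asboolP sr /asboolP ts; apply/asboolP; exact: subset_trans ts sr.
  - by move=> [A PA] [B PB] /asboolP BA /asboolP AB; exact/eq_exist/seteqP.
  move=> F Ftot; have [[sA FsA]|F0] := pselect (F !=set0); last first.
    by exists (SigSub (mem_set PG0)) => s Fs; exfalso; apply: F0; exists s.
  have FP : [set sval s | s in F] `<=` P by move=> _ [s _ <-]; exact/set_mem/valP.
  have totF : total_on [set sval s | s in F] subset.
    move=> _ _ [s Fs <-] [t Ft <-].
    by have [/asboolP|/asboolP] := Ftot _ _ Fs Ft; [right|left].
  have F'0 : [set sval s | s in F] !=set0 by exists (sval sA), sA.
  exists (SigSub (mem_set (capP _ FP F'0 totF))) => s Fs.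
  by apply/asboolP => x /= Fx; apply: Fx; exists s.
exists G; first exact/set_mem.
move=> H PH HG; have := Gmin (SigSub (mem_set PH)).
by move=> /(_ (asboolT HG)) /(congr1 sval).
Qed.

Lemma compact_total_bigcap_neq0 (X : topologicalType) (K : set X)
    (F : set (set X)) : compact K -> F !=set0 ->
  (forall A, F A -> [/\ closed A, A !=set0 & A `<=` K]) ->
  total_on F subset -> \bigcap_(A in F) A !=set0.
Proof.
move=> cK [A0 FA0] FclK Ftot.
have filterF : ProperFilter (filter_from F id).
  apply: filter_from_proper; last by move=> A /FclK[].
  apply: filter_from_filter; first by exists A0.
  move=> A B FA FB; have [AB|BA] := Ftot _ _ FA FB.
    by exists A => // x Ax; split => //; exact: AB.
  by exists B => // x Bx; split => //; exact: BA.
have [|p [_ clp]] := cK _ filterF.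
  by exists A0 => //; have [] := FclK _ FA0.
exists p => A FA; have [clA _ _] := FclK _ FA; apply: clA.
by move: clp; rewrite clusterE; apply; exists A.
Qed.

Lemma near_evals_close (R : realType) (T : Type) (F : set_system (T -> R))
    (FF : Filter F) (p : T -> R) (e : nat -> T) (r : R) :
  (forall x, (fun g => g x) @ F --> p x) -> 0 < r ->
  forall n, \forall g \near F, forall i, (i < n)%N -> `|p (e i) - g (e i)| < r.
Proof.
move=> Fp r0; elim=> [|n IHn]; first by apply: filterE => g i; rewrite ltn0.
have near_en : \forall g \near F, `|p (e n) - g (e n)| < r.
  exact: (cvgrPdist_lt _ _).1 (Fp (e n)) r r0.
apply: filterS2 IHn near_en => g close_n close_en i.
by rewrite ltnS leq_eqVlt => /predU1P[->|]; [exact: close_en | exact: close_n].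
Qed.

Section bauer_maximum_principle.
Variables (R : realType) (T : eqType) (K : set (T -> R)).
Hypothesis compactK : compact (K : set {ptws T -> R}).

Definition face (G : set (T -> R)) := forall (g h : T -> R) (t : R),
  K g -> K h -> 0 < t < 1 -> G (fun x => t * g x + (1 - t) * h x) -> G g /\ G h.

Definition closed_face (G : set (T -> R)) :=
  [/\ G !=set0, closed (G : set {ptws T -> R}), G `<=` K & face G].

Definition affine_on (phi : (T -> R) -> R) := forall (g h : T -> R) (t : R),
  K g -> K h -> 0 < t < 1 ->
  phi (fun x => t * g x + (1 - t) * h x) = t * phi g + (1 - t) * phi h.

Definition usc_on (phi : (T -> R) -> R) :=
  forall c, closed (K `&` [set f | c <= phi f] : set {ptws T -> R}).

Definition argmax (G : set (T -> R)) (phi : (T -> R) -> R) :=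
  [set f | G f /\ forall g, G g -> phi g <= phi f].

Lemma closedK : closed (K : set {ptws T -> R}).
Proof.
apply: compact_closed compactK; apply: hausdorff_product => _; exact: Rhausdorff.
Qed.

Lemma closed_faceK : K !=set0 -> closed_face K.
Proof. by move=> K0; split; [|exact: closedK| |move=> g h t Kg Kh]. Qed.

Lemma usc_on_eval x : usc_on (fun f => f x).
Proof.
move=> c; apply: closedI closedK _.
have := @preimage_closed {ptws T -> R} R (@proj T (fun=> R) x) _ _ (@closed_ge R c).
by apply=> f _; exact: proj_continuous.
Qed.

Lemma usc_on_closedI phi (G : set (T -> R)) c : usc_on phi ->
  closed (G : set {ptws T -> R}) -> G `<=` K ->
  closed (G `&` [set f | c <= phi f] : set {ptws T -> R}).
Proof.
move=> uphi clG GK; rewrite (_ : _ `&` _ = G `&` (K `&` [set f | c <= phi f])).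
  exact: closedI.
by apply/seteqP; split => f [Gf cf]; [split => //; split => //; exact: GK | case: cf].
Qed.

Lemma argmax_neq0 phi (G : set (T -> R)) : usc_on phi -> G !=set0 ->
  closed (G : set {ptws T -> R}) -> G `<=` K ->
  argmax G phi !=set0.
Proof.
move=> uphi [g0 Gg0] clG GK.
pose F := [set G `&` [set f | phi g <= phi f] | g in G].
have [p /= pmax] : \bigcap_(A in F) A !=set0.
  apply: (@compact_total_bigcap_neq0 {ptws T -> R} K) => //.
  - by exists (G `&` [set f | phi g0 <= phi f]), g0.
  - move=> _ [g Gg <-]; split; first exact: usc_on_closedI.
      by exists g; split => //; exact: lexx.
    by move=> f [Gf _]; exact: GK.
  - move=> _ _ [g Gg <-] [h Gh <-]; have [gh|hg] := leP (phi g) (phi h).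
      by right => f [Gf hf]; split => //; exact: le_trans hf.
    by left => f [Gf gf]; split => //; exact: le_trans (ltW hg) gf.
exists p; split; first by have [] := pmax _ (ex_intro2 _ _ g0 Gg0 erefl).
by move=> g Gg; have [] := pmax _ (ex_intro2 _ _ g Gg erefl).
Qed.

Lemma closed_face_argmax phi (G : set (T -> R)) : affine_on phi ->
  usc_on phi -> closed_face G -> closed_face (argmax G phi).
Proof.
move=> aphi uphi [G0 clG GK faceG].
have [p [Gp pmax]] := argmax_neq0 uphi G0 clG GK.
have -> : argmax G phi = G `&` [set f | phi p <= phi f].
  apply/seteqP; split => f [Gf fmax]; split => //; first exact: fmax.
  by move=> g Gg; exact: le_trans (pmax _ Gg) fmax.
split; [by exists p; split => //; exact: lexx | exact: usc_on_closedI | |].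
  by move=> f [Gf _]; exact: GK.
move=> g h t Kg Kh t01 [/(faceG _ _ _ Kg Kh t01)[Gg Gh]]; rewrite /= aphi // => pc.
have /andP[t0 t1] := t01; have := pmax _ Gg; have := pmax _ Gh.
by split; split => //; nra.
Qed.

Lemma closed_face_bigcap (F : set (set (T -> R))) : F `<=` closed_face ->
  F !=set0 -> total_on F subset -> closed_face (\bigcap_(G in F) G).
Proof.
move=> Fface [G0 FG0] Ftot; have [_ _ G0K _] := Fface _ FG0; split.
- apply: (@compact_total_bigcap_neq0 {ptws T -> R} K) => //; first by exists G0.
  by move=> G /Fface[].
- by apply: closed_bigI => G /Fface[].
- by move=> f Ff; exact: G0K (Ff _ FG0).
- move=> g h t Kg Kh t01 Fc; split => G FG; have [_ _ _ faceG] := Fface _ FG;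
    by have [] := faceG _ _ _ Kg Kh t01 (Fc _ FG).
Qed.

Lemma minimal_closed_face_set1 (G : set (T -> R)) : closed_face G ->
  (forall H, closed_face H -> H `<=` G -> H = G) -> exists f, G = [set f].
Proof.
move=> faceG Gmin; have [[f Gf] _ _ _] := faceG; exists f.
apply/seteqP; split => [g Gg|_ ->] //=; apply/funext => x.
have evalG : argmax G (fun f => f x) = G.
  apply: Gmin; last by move=> ? [].
  by apply: closed_face_argmax => //; exact: usc_on_eval.
have [[_ gmax] [_ fmax]] : argmax G (fun f => f x) g /\ argmax G (fun f => f x) f.
  by rewrite evalG.
by apply/eqP; rewrite eq_le fmax // gmax.
Qed.

Theorem bauer_maximum_principle phi : K !=set0 -> affine_on phi -> usc_on phi ->
  exists f, [/\ K f, face [set f] & forall g, K g -> phi g <= phi f].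
Proof.
move=> K0 aphi uphi.
have faceM := closed_face_argmax aphi uphi (closed_faceK K0).
have [G [faceG GM] Gmin] :
    exists2 G, closed_face G /\ G `<=` argmax K phi &
      forall H, closed_face H /\ H `<=` argmax K phi -> H `<=` G -> H = G.
  apply: Zorn_bigcap; first by exists (argmax K phi); split.
  move=> F FP F0 Ftot; split; first by apply: closed_face_bigcap => // G /FP[].
  by have [G FG] := F0; move=> f Ff; apply: (FP _ FG).2; exact: Ff.
have [f Gf] : exists f, G = [set f].
  apply: minimal_closed_face_set1 => // H faceH HG.
  by apply: Gmin => //; split => //; exact: subset_trans HG GM.
have [Kf fmax] : argmax K phi f by apply: GM; rewrite Gf.
by exists f; split => //; rewrite -Gf; case: faceG.
Qed.

End bauer_maximum_principle.

Section finite_measure_Rintegral.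
Context d (T : measurableType d) (R : realType).
Variable mu : {finite_measure set T -> \bar R}.

Lemma bounded_integrable (f : T -> R) (c : R) : measurable_fun setT f ->
  (forall x, `|f x| <= c) -> mu.-integrable setT (EFin \o f).
Proof.
move=> mf fc; apply: measurable_bounded_integrable => //.
  by rewrite ltey_eq fin_num_measure.
exists c; split; first exact: num_real.
by move=> M cM x _; apply: le_trans (fc x) (ltW cM).
Qed.

Lemma RintegralDZ (f g : T -> R) (a b : R) :
  mu.-integrable setT (EFin \o f) -> mu.-integrable setT (EFin \o g) ->
  \int[mu]_x (a * f x + b * g x) = a * \int[mu]_x f x + b * \int[mu]_x g x.
Proof.
move=> intf intg.
rewrite RintegralD ?RintegralZl //.
  exact: (integrableZl measurableT a intf).
exact: (integrableZl measurableT b intg).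
Qed.

Lemma Rintegral_dist_le (f g : T -> R) (U : set T) (c : R) : measurable U ->
  measurable_fun setT f -> measurable_fun setT g ->
  (forall x, `|f x| <= 1) -> (forall x, `|g x| <= 1) -> 0 <= c ->
  (forall x, U x -> `|f x - g x| <= c) ->
  `|\int[mu]_x f x - \int[mu]_x g x| <= c * fine (mu setT) + 2 * fine (mu (~` U)).
Proof.
move=> mU mf mg f1 g1 c0 fgU.
have mCU : measurable (~` U) := measurableC mU.
have intf := bounded_integrable mf f1; have intg := bounded_integrable mg g1.
have intU : mu.-integrable setT (EFin \o \1_(~` U)).
  apply: (bounded_integrable (c := 1)); first exact: measurable_indic.
  by move=> x; rewrite indicE; case: (x \in ~` U); rewrite ?normr1 ?normr0.
rewrite -RintegralB //; apply: le_trans (le_normr_Rintegral _ _) _ => //.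
  exact: (integrableB measurableT intf intg).
have int1 : mu.-integrable setT (EFin \o cst (1 : R)).
  apply: (bounded_integrable (c := 1)); first exact: measurable_cst.
  by move=> x; rewrite normr1.
have -> : c * fine (mu setT) + 2 * fine (mu (~` U)) =
    \int[mu]_x (c * cst 1 x + 2 * \1_(~` U) x).
  rewrite RintegralDZ // Rintegral_cst // mul1r /Rintegral integral_indic //.
  by rewrite setIT.
have intfg : mu.-integrable setT (EFin \o fun x => `|f x - g x|).
  apply: (bounded_integrable (c := 2)).
    by apply: measurableT_comp => //; exact: measurable_funB.
  by move=> x; rewrite normr_id (le_trans (ler_normB _ _)) // -[2]/(1 + 1) lerD.
apply: le_Rintegral => //.
  exact: (integrableD measurableT (integrableZl measurableT c int1)
    (integrableZl measurableT 2 intU)).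
move=> x _; rewrite /= indicE mulr1; have [xU|xU] := boolP (x \in ~` U).
  have := ler_normB (f x) (g x); have := f1 x; have := g1 x; rewrite mulr1; lra.
move: xU; rewrite notin_setE /= => /contrapT xU; rewrite mulr0 addr0.
exact: fgU.
Qed.

End finite_measure_Rintegral.

Lemma lipschitz_measurable (R : realType) (S : pmetricType R) (g : S -> R) :
  (forall x y, `|g x - g y| <= mdist x y) ->
  measurable_fun [set: borel_of S] g.
Proof.
move=> glip; apply: (measurability _ (RGenOpens.measurableE R)).
move=> _ [_ [a [b ->] <-]]; apply: sub_gen_smallest.
rewrite setTI openE => z /=; rewrite in_itv /= => /andP[az zb].
apply/nbhs_ballP; exists (Num.min (g z - a) (b - g z)) => /=.
  by rewrite lt_min !subr_gt0 az zb.
move=> w; rewrite ballEmdist /= lt_min in_itv /= => /andP[za zb'].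
have := le_lt_trans (glip z w) za; have := le_lt_trans (glip z w) zb'.
by rewrite !ltr_norml => /andP[? ?] /andP[? ?]; apply/andP; split; lra.
Qed.

Section unit_ball.
Variables (R : realType) (S : pmetricType R).

Definition lip_ratio (f : S -> R) (x y : S) : R := `|f x - f y| / mdist x y.

Definition lipschitz_ball (k : norm_kind) : set (S -> R) :=
  [set f | (forall x, `|f x| <= 1) /\
    match k with
    | FM => forall y z, y != z -> lip_ratio f y z <= 1
    | BL => forall x y z, y != z -> `|f x| + lip_ratio f y z <= 1
    end].

Lemma sup_norm_le1 (f : S -> R) :
  (sup_norm f <= 1)%E <-> forall x, `|f x| <= 1.
Proof.
split=> [fle1 x|fle1]; first by rewrite -lee_fin (le_trans _ fle1) //;
  apply: ereal_sup_ubound; right; exists x.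
by apply: ge_ereal_sup => _ [->|[x _ <-]]; rewrite ?lee01 ?lee_fin.
Qed.

Lemma lip_seminorm_le1 (f : S -> R) :
  (lip_seminorm f <= 1)%E <-> forall x y, x != y -> lip_ratio f x y <= 1.
Proof.
split=> [fle1 x y xy|fle1]; first by rewrite -lee_fin (le_trans _ fle1) //;
  apply: ereal_sup_ubound; right; exists x, y.
by apply: ge_ereal_sup => _ [->|[x [y [xy ->]]]]; rewrite ?lee01 ?lee_fin ?fle1.
Qed.

Lemma unit_ballE k : unit_ball k = lipschitz_ball k.
Proof.
apply/seteqP; split=> f; rewrite /unit_ball /bnorm /=; case: k => /=.
- by rewrite ge_max => /andP[/sup_norm_le1 ? /lip_seminorm_le1 ?].
- rewrite ereal_supD_le; first last.
  + by move=> _ [->|[x [y [_ ->]]]].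
  + by move=> _ [->|[x _ <-]].
  + by exists 0%E; left.
  + by exists 0%E; left.
  move=> fle1; split=> [x|x y z yz].
    by rewrite -lee_fin -[_%:E]adde0 fle1 //; [right; exists x | left].
  by rewrite -lee_fin EFinD fle1 //; [right; exists x | right; exists y, z].
- move=> [fle1 lip1]; rewrite ge_max.
  by apply/andP; split; [exact/sup_norm_le1 | exact/lip_seminorm_le1].
- move=> [fle1 lip1]; rewrite ereal_supD_le; first last.
  + by move=> _ [->|[x [y [_ ->]]]].
  + by move=> _ [->|[x _ <-]].
  + by exists 0%E; left.
  + by exists 0%E; left.
  have lip1' y z : y != z -> lip_ratio f y z <= 1.
    by move=> yz; apply: le_trans (lip1 point _ _ yz); rewrite lerDr.
  move=> _ _ [->|[x _ <-]] [->|[y [z [yz ->]]]]; rewrite ?add0e ?adde0 ?lee_fin //.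
  + exact: lip1'.
  + exact: lip1.
Qed.

Variable k : norm_kind.

Lemma unit_ball_bound (f : S -> R) : unit_ball k f -> forall x, `|f x| <= 1.
Proof. by rewrite unit_ballE => -[]. Qed.

Lemma unit_ball_lipschitz (f : S -> R) :
  unit_ball k f -> forall x y, `|f x - f y| <= mdist x y.
Proof.
rewrite unit_ballE => -[fle1 flip] x y.
have [->|xy] := eqVneq x y; first by rewrite subrr normr0 mdist_ge0.
suff : lip_ratio f x y <= 1 by rewrite /lip_ratio ler_pdivrMr ?mdist_gt0 // mul1r.
case: k flip => [|flip]; first exact.
by apply: le_trans (flip point _ _ xy); rewrite lerDr.
Qed.

Lemma unit_ball0 : unit_ball k (fun _ : S => 0).
Proof.
rewrite unit_ballE; split=> [x|]; first by rewrite normr0.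
by case: k => /= *; rewrite /lip_ratio subrr !normr0 mul0r ?add0r.
Qed.

Lemma closed_unit_ball : closed (@unit_ball R S k : set {ptws S -> R}).
Proof.
rewrite unit_ballE => p; rewrite closureEcvg => -[G PG [Gp ballG]].
have {}ballG : G (lipschitz_ball k) by apply: ballG.
have evalG x : (fun g : S -> R => g x) @ G --> p x.
  exact: (@pointwise_cvgP S R G p PG).1 Gp x.
have ratioG y z : (fun g => lip_ratio g y z) @ G --> lip_ratio p y z.
  by apply: cvgMr_tmp; apply: cvg_norm; apply: cvgB.
have le1 (E : (S -> R) -> R) l :
    E @ G --> l -> (\forall g \near G, E g <= 1) -> l <= 1.
  by move=> El Ele1; exact: closed_cvg _ (@closed_le R 1) Ele1 _ El.
split=> [x|].
  by apply: le1 (cvg_norm (evalG x)) _; apply: filterS ballG => g [].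
case: k ballG => ballG /= => [y z|x y z] yz.
  by apply: le1 (ratioG y z) _; apply: filterS ballG => g [_]; apply.
apply: le1 (cvgD (cvg_norm (evalG x)) (ratioG y z)) _.
by apply: filterS ballG => g [_]; apply.
Qed.

Lemma compact_unit_ball : compact (@unit_ball R S k : set {ptws S -> R}).
Proof.
pose box : set {ptws S -> R} := [set f | forall x, `[-1, 1]%classic (f x)].
have cbox : compact box.
  apply: (@tychonoff S (fun=> R) (fun=> `[-1, 1]%classic)) => x.
  exact: segment_compact.
apply: subclosed_compact closed_unit_ball cbox _ => f /unit_ball_bound fb x.
by rewrite /= in_itv /= -ler_norml.
Qed.

Lemma unit_ball_measurable (f : S -> R) :
  unit_ball k f -> measurable_fun [set: borel_of S] f.
Proof. by move=> /unit_ball_lipschitz; exact: lipschitz_measurable. Qed.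

End unit_ball.

Section separable_cover.
Variables (R : realType) (S : pmetricType R).

Definition ball_cover (e : nat -> S) (r : R) (n : nat) : set S :=
  \bigcup_(i in `I_n) ball (e i) r.

Lemma measurable_ball_cover e r n :
  measurable (ball_cover e r n : set (borel_of S)).
Proof.
apply: bigcup_measurable => i _; rewrite ballEmdist.
have := lipschitz_measurable (g := mdist (e i)) _ measurableT
  (measurable_itv `]-oo, r[).
rewrite setTI; apply=> x y.
have := metric_triangle (e i) x y; have := metric_triangle (e i) y x.
by rewrite ler_norml (metric_sym x y) => *; apply/andP; split; lra.
Qed.

Lemma separable_ball_cover (mu : {finite_measure set (borel_of S) -> \bar R})
    (S0 : set (borel_of S)) :
  measurable S0 -> separable_subset S0 -> mu S0 = mu setT ->
  exists e : nat -> S, forall r, 0 < r -> forall eta, 0 < eta ->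
    exists n, fine (mu (~` ball_cover e r n)) <= eta.
Proof.
move=> mS0 [D [cD [_ S0D]]] muS0; have /pcard_surjP[e eD] := cD.
exists e => r r0 eta eta0; pose U := ball_cover e r.
have ndU : {homo U : n m / (n <= m)%N >-> (n <= m)%O}.
  move=> n m nm; apply/subsetPset => x [i /= ilt xi].
  by exists i => //=; exact: leq_trans nm.
have S0U : S0 `<=` \bigcup_n U n.
  move=> x /S0D /(_ (ball x r) (nbhsx_ballx x r r0)) [y [Dy xy]].
  have [i _ eiy] := eD y Dy; exists i.+1 => //; exists i => //=.
  by rewrite eiy; exact: ball_sym.
have mU n : measurable (U n : set (borel_of S)) := measurable_ball_cover e r n.
have mUoo : measurable (\bigcup_n U n : set (borel_of S)).
  exact: bigcupT_measurable.
have muU : mu (\bigcup_n U n : set (borel_of S)) = mu setT.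
  apply/eqP; rewrite eq_le le_measure ?inE //= -muS0 le_measure ?inE //.
have : (mu \o U) n @[n --> \oo] --> mu setT.
  by rewrite -muU; exact: nondecreasing_cvg_mu.
rewrite -(fineK (fin_num_measure mu _ measurableT)) => /fine_cvgP[_ cvgU].
have [n /= muUn] := filter_ex ((cvgrPdist_lt _ _).1 cvgU eta eta0).
exists n; rewrite -setTD measureD ?setTI ?ltey_eq ?fin_num_measure //.
rewrite fineB ?fin_num_measure //; exact: le_trans (ler_norm _) (ltW muUn).
Qed.

Lemma ball_cover_close (g p : S -> R) (e : nat -> S) (r : R) (n : nat) :
  (forall x y, `|g x - g y| <= mdist x y) ->
  (forall x y, `|p x - p y| <= mdist x y) ->
  (forall i, (i < n)%N -> `|p (e i) - g (e i)| < r) ->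
  forall x, ball_cover e r n x -> `|g x - p x| <= 3 * r.
Proof.
move=> glip plip close x [i /= ilt]; rewrite ballEmdist /= => eix.
have := glip x (e i); have := plip (e i) x; have := close i ilt.
rewrite (metric_sym x) distrC => gi pi ci.
have : `|g x - p x| <= `|g x - g (e i)| + `|g (e i) - p (e i)| + `|p (e i) - p x|.
  have -> : g x - p x = g x - g (e i) + (g (e i) - p (e i)) + (p (e i) - p x).
    by ring.
  by rewrite (le_trans (ler_normD _ _)) // lerD2r ler_normD.
lra.
Qed.

End separable_cover.

Section signed_Rintegral.
Variables (R : realType) (S : pmetricType R).
Variables (nu : {charge set (borel_of S) -> \bar R}) (P N : set (borel_of S)).
Variable nuPN : hahn_decomposition nu P N.

Local Notation mu_pos := (jordan_pos nuPN).
Local Notation mu_neg := (jordan_neg nuPN).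

Definition signed_Rintegral (f : S -> R) : R :=
  \int[mu_pos]_x f x - \int[mu_neg]_x f x.

Lemma signed_integralE (f : S -> R) (c : R) :
  measurable_fun [set: borel_of S] f -> (forall x, `|f x| <= c) ->
  signed_integral nuPN f = (signed_Rintegral f)%:E.
Proof.
move=> mf fc; rewrite /signed_integral EFinB !fineK //.
  exact/integrable_fin_num/(bounded_integrable _ mf fc).
exact/integrable_fin_num/(bounded_integrable _ mf fc).
Qed.

Lemma signed_Rintegral_affine (g h : S -> R) (a b c : R) :
  measurable_fun [set: borel_of S] g -> (forall x, `|g x| <= c) ->
  measurable_fun [set: borel_of S] h -> (forall x, `|h x| <= c) ->
  signed_Rintegral (fun x => a * g x + b * h x) =
    a * signed_Rintegral g + b * signed_Rintegral h.
Proof.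
move=> mg gc mh hc; rewrite /signed_Rintegral !RintegralDZ //;
  try exact: bounded_integrable.
by ring.
Qed.

Lemma signed_Rintegral_dist_le (f g : S -> R) (U : set (borel_of S)) (c : R) :
  measurable U ->
  measurable_fun [set: borel_of S] f -> measurable_fun [set: borel_of S] g ->
  (forall x, `|f x| <= 1) -> (forall x, `|g x| <= 1) -> 0 <= c ->
  (forall x, U x -> `|f x - g x| <= c) ->
  `|signed_Rintegral f - signed_Rintegral g| <=
    c * fine (charge_variation nuPN setT) +
    2 * fine (charge_variation nuPN (~` U)).
Proof.
move=> mU mf mg f1 g1 c0 fgU; rewrite /charge_variation /=.
have mCU : measurable (~` U) := measurableC mU.
rewrite !fineD ?fin_num_measure //.
have := Rintegral_dist_le mu_pos mU mf mg f1 g1 c0 fgU.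
have := Rintegral_dist_le mu_neg mU mf mg f1 g1 c0 fgU.
rewrite /signed_Rintegral; set a := \int[mu_pos]_x f x; set b := \int[mu_neg]_x f x.
set a' := \int[mu_pos]_x g x; set b' := \int[mu_neg]_x g x => hneg hpos.
apply: le_trans (_ : `|a - a'| + `|b - b'| <= _); last by lra.
have -> : a - b - (a' - b') = (a - a') - (b - b') by ring.
exact: ler_normB.
Qed.

Variable k : norm_kind.

(* [charge_variation nuPN] is only declared a measure and a charge. *)
HB.instance Definition _ := @Measure_isFinite.Build _ _ _ (charge_variation nuPN)
  (fun A mA => fin_num_measure (charge_variation nuPN) A mA).

Lemma signed_integral_unit_ball (f : S -> R) : unit_ball k f ->
  signed_integral nuPN f = (signed_Rintegral f)%:E.
Proof.
move=> Bf.
exact: signed_integralE (unit_ball_measurable Bf) (unit_ball_bound Bf).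
Qed.

Lemma affine_on_signed_Rintegral : affine_on (unit_ball k) signed_Rintegral.
Proof.
move=> g h t Bg Bh _; apply: signed_Rintegral_affine.
- exact: unit_ball_measurable Bg.
- exact: unit_ball_bound Bg.
- exact: unit_ball_measurable Bh.
- exact: unit_ball_bound Bh.
Qed.

Lemma usc_on_signed_Rintegral :
  separable_charge nuPN -> usc_on (unit_ball k) signed_Rintegral.
Proof.
move=> [S0 [mS0 [sepS0 varS0]]] c p clp.
have [e ecover] :=
  separable_ball_cover (mu := charge_variation nuPN) mS0 sepS0 varS0.
have Bp : unit_ball k p.
  by apply: closed_unit_ball; apply: closureS clp => f [].
split=> //; apply/ler_addgt0Pr => eps eps0.
pose a := fine (charge_variation nuPN setT).
have a0 : 0 <= a by apply/fine_ge0/measure_ge0.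
pose r := eps / (6 * (a + 1)).
have r0 : 0 < r by rewrite divr_gt0 // mulr_gt0 // ltr_wpDl.
have ra : 6 * r * a <= eps.
  have : r * (6 * (a + 1)) = eps.
    by rewrite /r mulfVK // gt_eqF // mulr_gt0 // ltr_wpDl.
  nra.
have [n cover_n] := ecover r r0 (eps / 4) (divr_gt0 eps0 (ltr0Sn _ 3)).
have evalp x : (fun g : S -> R => g x) @ (p : {ptws S -> R}) --> p x.
  exact: (@proj_continuous S (fun=> R) x p).
(* [g] is close to [p] at [e 0], ..., [e n.-1], hence [3 r]-close on a set
   whose complement has variation at most [eps / 4]. *)
have [g [[Bg /= cg] close]] :=
  clp _ (near_evals_close (@nbhs_filter {ptws S -> R} p) e evalp r0 n).
have := signed_Rintegral_dist_le (measurable_ball_cover e r n)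
  (unit_ball_measurable Bg) (unit_ball_measurable Bp)
  (unit_ball_bound Bg) (unit_ball_bound Bp) (_ : 0 <= 3 * r)
  (ball_cover_close (unit_ball_lipschitz Bg) (unit_ball_lipschitz Bp) close).
rewrite -/a => /(_ (mulr_ge0 (ler0n _ 3) (ltW r0))) /ler_normlW.
lra.
Qed.

End signed_Rintegral.

Lemma face_set1_extreme (R : realType) (S : pmetricType R) (B : set (S -> R))
    (f : S -> R) : B f -> face B [set f] -> extreme_point B f.
Proof.
move=> Bf faceBf; split=> // g h t Bg Bh t01 fE.
exact: faceBf g h t Bg Bh t01 (esym fE).
Qed.

Theorem proposition2p2 (R : realType) (S : pmetricType R)
    (nu : {charge set (borel_of S) -> \bar R}) (P N : set (borel_of S))
    (nuPN : hahn_decomposition nu P N) (k : norm_kind) :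
  separable_charge nuPN ->
  exists f : S -> R,
    extreme_point (unit_ball k) f /\ dual_norm nuPN k = signed_integral nuPN f.
Proof.
move=> sep_nu.
have [f [Bf face_f fmax]] := bauer_maximum_principle (compact_unit_ball (k := k))
  (ex_intro _ _ (unit_ball0 S k)) (affine_on_signed_Rintegral nuPN (k := k))
  (usc_on_signed_Rintegral (k := k) sep_nu).
exists f; split; first exact: face_set1_extreme.
rewrite (signed_integral_unit_ball nuPN Bf).
apply/eqP; rewrite eq_le; apply/andP; split.
  apply: ge_ereal_sup => _ [g Bg <-].
  by rewrite (signed_integral_unit_ball nuPN Bg) lee_fin fmax.
apply: ereal_sup_ubound; exists f => //.
by rewrite (signed_integral_unit_ball nuPN Bf).
Qed.
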